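(* Let $A$ be an essential arrangement of affine hyperplanes in a real affine space $V$, $f_0$ a non-constant affine-linear function, and for large $t$ let $A_t=A\cup\{\{f_0=t\}\}$. Let $H=\{f=0\}\in A$, let $\Delta$ be a growing domain of $A$ on which $|f|$ is unbounded, and let $\Delta_t=\Delta\cap\{f_0<t\}$. Let $\alpha\in\mathbb C$ and let $g=\exp(\alpha(\log|f|+i\theta))$ be a branch of $f^\alpha$ on $\Delta$, where $\theta$ is a real constant. Then, as $t\to+\infty$, $$c(g,\Delta_t)=c(g,\Delta,f_0)\,t^{\alpha}(1+o(1)),$$ where $t^\alpha=e^{\alpha\log t}$ with real $\log t$.
   Context: Domains and faces are as usual, and a domain is growing if it is unbounded and $f_0\to+\infty$ at infinity in it. $c(g,\Delta_t)$ is the value of $g$ on the external support of the bounded domain $\Delta_t$ of $A_t$ with respect to $f$; the external support of a bounded face $D$ with respect to an affine function $g$ is the face of highest dimension in the set of points of $\bar D$ where $|g|$ is maximal. Let $W=H_\infty\setminus\overline{\{f_0=0\}}$ in the projective completion $\bar V=V\cup H_\infty$, and $h([v])=f^0(v)/f_0^0(v)$ on $W$, with $f^0$ the linear part. $tr(\Delta)$ is the face of highest dimension among the faces of $\bar A$ lying in $H_\infty$ and contained in the closure of $\Delta$ in $\bar V$; it is a bounded face of the arrangement in $W$ of the non-constant functions $f_i^0/f_0^0$. Let $\Sigma'$ be the external support of $tr(\Delta)$ with respect to $h$. Then $c(g,\Delta,f_0)=\exp(\alpha(\log|h(\Sigma')|+i\theta))$. *)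

From HB Require Import structures.
From mathcomp Require Import all_boot all_order all_algebra.
From mathcomp Require Import all_classical all_reals all_analysis.
From mathcomp Require Import complex.
Set Implicit Arguments. Unset Strict Implicit. Unset Printing Implicit Defensive.
Import Order.TTheory GRing.Theory Num.Theory.
Import numFieldNormedType.Exports.
Local Open Scope classical_set_scope.
Local Open Scope ring_scope.
Local Open Scope complex_scope.

Section Arr.
Variables (R : realType) (n : nat).

Notation V := 'rV[R]_n.

(* An affine-linear function x |-> a.x + b is encoded by the pair (a, b). *)
Definition affn := (V * R)%type.

Definition lin (f : affn) (v : V) : R := \sum_(i < n) f.1 0 i * v 0 i.
Definition aff (f : affn) (x : V) : R := lin f x + f.2.

Definition nonconstant (f : affn) : Prop := f.1 != 0.

Definition hyperplane (f : affn) : set V := [set x | aff f x = 0].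

(* An arrangement of affine hyperplanes, given by a finite list of
   non-constant affine functions (hyperplane {h = 0} for each h). *)
Definition arrangement (A : seq affn) : Prop := all (fun h => h.1 != 0) A.

(* Essential: the linear parts span the dual space (rank n). *)
Definition essential (A : seq affn) : Prop :=
  row_full (\matrix_(i < size A) (nth (0, 0) A i).1).

Definition arr_compl (A : seq affn) : set V :=
  [set x | forall h, h \in A -> aff h x != 0].

Definition hyp_in (H : set V) (A : seq affn) : Prop :=
  exists2 h, h \in A & hyperplane h = H.

Definition is_domain (A : seq affn) (D : set V) : Prop :=
  exists x0, arr_compl A x0 /\ D = connected_component (arr_compl A) x0.

Definition growing (A : seq affn) (f0 : affn) (D : set V) : Prop :=
  is_domain A D /\ ~ bounded_set D /\
  (forall M : R, exists r : R, forall x, D x -> r < `|x| -> M < aff f0 x).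

Definition cexp (z : R[i]) : R[i] :=
  (expR (complex.Re z) * cos (complex.Im z)) +i* (expR (complex.Re z) * sin (complex.Im z)).

(* x is a point of the closure of the bounded set D where |f| is maximal,
   i.e. a point of the set containing the external support of D w.r.t. f *)
Definition ext_pt (D : set V) (f : affn) (x : V) : Prop :=
  closure D x /\ forall y, closure D y -> `|aff f y| <= `|aff f x|.

(* recession cone of the closure of D: the directions [v] (v != 0) of this
   cone are exactly the points of H_oo in the closure of D in the projective
   completion *)
Definition rec_cone (D : set V) : set V :=
  [set v | forall x (s : R), closure D x -> 0 <= s -> closure D (x + s *: v)].

(* h([v]) = f^0(v) / f_0^0(v), defined on W (f_0^0(v) != 0) *)
Definition hinf (f f0 : affn) (v : V) : R := lin f v / lin f0 v.

(* K = |h(Sigma')|: the maximal value of |h| on the closure of tr(Delta)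
   (= the set of [v], v in the recession cone, v != 0). *)
Definition ext_value_inf (D : set V) (f f0 : affn) (K : R) : Prop :=
  (exists v, [/\ rec_cone D v, v != 0, lin f0 v != 0 & `|hinf f f0 v| = K]) /\
  (forall w, rec_cone D w -> w != 0 -> lin f0 w != 0 -> `|hinf f f0 w| <= K).

End Arr.

Definition cmod (R : realType) (z : R[i]) : R :=
  Num.sqrt (complex.Re z ^+ 2 + complex.Im z ^+ 2).

From HB Require Import structures.
From mathcomp Require Import all_boot all_order all_algebra.
From mathcomp Require Import all_classical all_reals all_analysis.
From mathcomp Require Import complex.
From mathcomp Require Import ring lra.
Import Order.TTheory GRing.Theory Num.Theory.
Import numFieldNormedType.Exports.
Local Open Scope classical_set_scope.
Local Open Scope ring_scope.
Local Open Scope complex_scope.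
Set Implicit Arguments. Unset Strict Implicit. Unset Printing Implicit Defensive.

(* Delta is the open cell of the arrangement through any of its points x0, cut out by
   the signs of the functions of A at x0, and its closure is the polyhedron where
   h(x0) h(x) >= 0 for h in A; the points of tr(Delta) are the directions of the
   recession cone C of this polyhedron.  Growth of f0 forces f0^0 > 0 on C \ {0}, so
   the slice C /\ {f0^0 = 1} is a polytope and K = |h(Sigma')| = max |f^0| on it.
   Linear programming over the closure gives |f| <= K f0 + O(1) there, while walking
   from x0 along a maximizing direction reaches f0 = t with |f| >= K t - O(1).  So
   |f| = K t + O(1) on the external support of Delta_t, i.e. log |f| = log K + log t
   + o(1) there, which is the claim after exponentiating. *)

Section AffineFunctions.
Variables (R : realType) (n : nat).
Local Notation V := 'rV[R]_n.
Implicit Types (a b : affn R n) (x y v : V) (k : R).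

Lemma linDr a x y : lin a (x + y) = lin a x + lin a y.
Proof. by rewrite /lin -big_split; apply: eq_bigr => i _; rewrite mxE mulrDr. Qed.

Lemma linZr a k x : lin a (k *: x) = k * lin a x.
Proof. by rewrite /lin mulr_sumr; apply: eq_bigr => i _; rewrite mxE mulrCA. Qed.

Lemma lin0r a : lin a 0 = 0.
Proof. by rewrite -(scale0r 0) linZr mul0r. Qed.

Lemma linBr a x y : lin a (x - y) = lin a x - lin a y.
Proof. by rewrite linDr -scaleN1r linZr mulN1r. Qed.

Lemma linDl a b x : lin (a + b) x = lin a x + lin b x.
Proof. by rewrite /lin -big_split; apply: eq_bigr => i _; rewrite !mxE mulrDl. Qed.

Lemma linZl k a x : lin (k *: a) x = k * lin a x.
Proof. by rewrite /lin mulr_sumr; apply: eq_bigr => i _; rewrite !mxE mulrA. Qed.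

Lemma linNl a x : lin (- a) x = - lin a x.
Proof. by rewrite -scaleN1r linZl mulN1r. Qed.

Lemma linBl a b x : lin (a - b) x = lin a x - lin b x.
Proof. by rewrite linDl linNl. Qed.

Lemma affDr a x v : aff a (x + v) = aff a x + lin a v.
Proof. by rewrite /aff linDr addrAC. Qed.

Lemma affB a x y : aff a x - aff a y = lin a (x - y).
Proof. by rewrite /aff linBr; ring. Qed.

Lemma affDl a b x : aff (a + b) x = aff a x + aff b x.
Proof. by rewrite /aff linDl /=; ring. Qed.

Lemma affZl k a x : aff (k *: a) x = k * aff a x.
Proof. by rewrite /aff linZl mulrDr. Qed.

Lemma affNl a x : aff (- a) x = - aff a x.
Proof. by rewrite -scaleN1r affZl mulN1r. Qed.

Lemma affBl a b x : aff (a - b) x = aff a x - aff b x.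
Proof. by rewrite affDl affNl. Qed.

Definition aff_const k : affn R n := (0, k).

Lemma lin_aff_const k x : lin (aff_const k) x = 0.
Proof. by rewrite /lin big1 // => i _; rewrite mxE mul0r. Qed.

Lemma aff_constE k x : aff (aff_const k) x = k.
Proof. by rewrite /aff lin_aff_const add0r. Qed.

Definition lin_part a : affn R n := (a.1, 0).

Lemma lin_lin_part a x : lin (lin_part a) x = lin a x.
Proof. by []. Qed.

Lemma aff_lin_part a x : aff (lin_part a) x = lin a x.
Proof. by rewrite /aff addr0. Qed.

Lemma aff_segment a x y k : aff a (x + k *: (y - x)) = (1 - k) * aff a x + k * aff a y.
Proof. by rewrite affDr linZr -affB; ring. Qed.

Lemma nonzero_of_lin a v : lin a v != 0 -> v != 0.
Proof. by apply: contraNneq => ->; rewrite lin0r. Qed.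

End AffineFunctions.

Lemma ler_norm_of_bounds (R : realDomainType) (y c B1 B2 : R) :
  y <= c + B1 -> - y <= c + B2 -> `|y| <= c + (`|B1| + `|B2|).
Proof.
have := ler_norm B1; have := ler_norm B2; have := normr_ge0 B1; have := normr_ge0 B2.
by rewrite ler_norml => *; apply/andP; split; lra.
Qed.

Lemma forall_cons (T : eqType) (P : T -> Prop) a s :
  (forall b, b \in a :: s -> P b) <-> P a /\ (forall b, b \in s -> P b).
Proof.
split=> [H|[Pa Ps] b]; last by rewrite inE => /orP[/eqP->|/Ps].
by split=> [|b bs]; apply: H; rewrite inE ?eqxx ?bs ?orbT.
Qed.

Section Polyhedra.
Variables (R : realType) (n : nat).
Local Notation V := 'rV[R]_n.
Implicit Types (J E : seq (affn R n)) (a c : affn R n) (x y z v : V).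

Definition polyhedron J E : set V :=
  [set x | (forall a, a \in J -> 0 <= aff a x) /\ (forall e, e \in E -> aff e x = 0)].

Definition recession J E : set V :=
  [set v | (forall a, a \in J -> 0 <= lin a v) /\ (forall e, e \in E -> lin e v = 0)].

Lemma polyhedron_cons a J E x :
  polyhedron (a :: J) E x <-> 0 <= aff a x /\ polyhedron J E x.
Proof. by split=> [[/forall_cons[ax HJ] HE]|[ax [HJ HE]]]; split=> //; exact/forall_cons. Qed.

Lemma polyhedron_face a J E x :
  polyhedron J (a :: E) x <-> aff a x = 0 /\ polyhedron J E x.
Proof. by split=> [[HJ /forall_cons[ax HE]]|[ax [HJ HE]]]; split=> //; exact/forall_cons. Qed.

Lemma recession_cons a J E v :
  recession (a :: J) E v <-> 0 <= lin a v /\ recession J E v.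
Proof. by split=> [[/forall_cons[av HJ] HE]|[av [HJ HE]]]; split=> //; exact/forall_cons. Qed.

Lemma recession_face a J E v :
  recession J (a :: E) v <-> lin a v = 0 /\ recession J E v.
Proof. by split=> [[HJ /forall_cons[av HE]]|[av [HJ HE]]]; split=> //; exact/forall_cons. Qed.

Lemma polyhedron_faceW a J E x : polyhedron J (a :: E) x -> polyhedron (a :: J) E x.
Proof. by case/polyhedron_face=> ax Px; apply/polyhedron_cons; rewrite ax. Qed.

Lemma recessionZ J E v k : recession J E v -> 0 <= k -> recession J E (k *: v).
Proof.
move=> [vJ vE] k0; split=> [a aJ|e eE]; rewrite linZr; first by rewrite mulr_ge0 ?vJ.
by rewrite vE ?mulr0.
Qed.

Lemma polyhedron_lin_part J v :
  polyhedron [seq lin_part a | a <- J] [::] v <-> recession J [::] v.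
Proof.
split=> [[HJ _]|[HJ _]]; split=> // a.
  by move=> aJ; rewrite -aff_lin_part; apply: HJ; exact: map_f.
by case/mapP=> b bJ ->; rewrite aff_lin_part; exact: HJ.
Qed.

Lemma polyhedron_ray J E x v s : polyhedron J E x -> recession J E v -> 0 <= s ->
  polyhedron J E (x + s *: v).
Proof.
move=> [xJ xE] [vJ vE] s0; split=> [a aJ|e eE]; rewrite affDr linZr.
  by rewrite addr_ge0 ?mulr_ge0 ?xJ ?vJ.
by rewrite xE ?vE // mulr0 addr0.
Qed.

Lemma recession_unbounded J E c x v : polyhedron J E x -> recession J E v ->
  0 < lin c v -> forall M, exists2 y, polyhedron J E y & M < aff c y.
Proof.
move=> Px Rv cv M; pose s := `|M - aff c x| / lin c v + 1.
have s0 : 0 <= s by rewrite addr_ge0 // divr_ge0 // ltW.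
exists (x + s *: v); first exact: polyhedron_ray.
rewrite affDr linZr /s mulrDl mul1r divfK ?gt_eqF //.
by have := ler_norm (M - aff c x); lra.
Qed.

Lemma ray_to_face a J E c y v : polyhedron (a :: J) E y -> recession J E v ->
  lin a v < 0 -> 0 <= lin c v -> exists2 z, polyhedron J (a :: E) z & aff c y <= aff c z.
Proof.
case/polyhedron_cons=> ay Py Rv av cv; pose s := aff a y / - lin a v.
have s0 : 0 <= s by rewrite divr_ge0 // oppr_ge0 ltW.
exists (y + s *: v); last by rewrite affDr linZr lerDl mulr_ge0.
apply/polyhedron_face; split; last exact: polyhedron_ray.
by rewrite affDr linZr /s; field; rewrite ltr0_neq0.
Qed.

Lemma segment_to_face a J E c y z : polyhedron (a :: J) E y -> polyhedron J E z ->
  aff a z < 0 -> aff c y <= aff c z -> exists2 w, polyhedron J (a :: E) w & aff c y <= aff c w.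
Proof.
case/polyhedron_cons=> ay [yJ yE] [zJ zE] az cyz; pose s := aff a y / (aff a y - aff a z).
have d0 : 0 < aff a y - aff a z by rewrite subr_gt0 (lt_le_trans az).
have s0 : 0 <= s by rewrite divr_ge0 // ltW.
have s1 : s <= 1 by rewrite ler_pdivrMr // mul1r lerDl oppr_ge0 ltW.
exists (y + s *: (z - y)); last by rewrite aff_segment; nra.
apply/polyhedron_face; split; first by rewrite aff_segment /s; field; rewrite gt_eqF.
split=> [b bJ|e eE]; rewrite aff_segment; last by rewrite yE ?zE // !mulr0 addr0.
by rewrite addr_ge0 // mulr_ge0 ?subr_ge0 ?yJ ?zJ.
Qed.

Lemma unbounded_recession J : forall E c,
  (forall M, exists2 x, polyhedron J E x & M < aff c x) ->
  exists2 v, recession J E v & 0 < lin c v.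
Proof.
elim: J => [|a J IH] E c unb.
  have [x1 [_ E1] _] := unb 0; have [x2 [_ E2] lt12] := unb (aff c x1).
  exists (x2 - x1); last by rewrite -affB subr_gt0.
  by split=> // e eE; rewrite -affB E1 ?E2 ?subrr.
have [v Rv cv] : exists2 v, recession J E v & 0 < lin c v.
  by apply: IH => M; have [x /polyhedron_cons[_ Px] Mx] := unb M; exists x.
have [av|av] := leP 0 (lin a v); first by exists v => //; apply/recession_cons.
have [w /recession_face[aw Rw] cw] : exists2 w, recession J (a :: E) w & 0 < lin c w.
  apply: IH => M; have [x Px Mx] := unb M.
  have [z Pz xz] := ray_to_face Px Rv av (ltW cv).
  by exists z; last exact: lt_le_trans xz.
by exists w => //; apply/recession_cons; rewrite aw.
Qed.

Lemma bounded_or_recession J E c :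
  (exists B, forall x, polyhedron J E x -> aff c x <= B) \/
  exists2 v, recession J E v & 0 < lin c v.
Proof.
have [|unb] := pselect (exists B, forall x, polyhedron J E x -> aff c x <= B); first by left.
right; apply: unbounded_recession => M; apply: contra_notP unb => noM.
by exists M => x Px; rewrite leNgt; apply/negP => Mx; apply: noM; exists x.
Qed.

Lemma polyhedron_max J : forall E c, (exists x, polyhedron J E x) ->
  (exists B, forall x, polyhedron J E x -> aff c x <= B) ->
  exists2 xs, polyhedron J E xs & forall x, polyhedron J E x -> aff c x <= aff c xs.
Proof.
elim: J => [|a J IH] E c [x1 P1] [B HB].
  exists x1 => // x Px; rewrite leNgt; apply/negP => lt.
  have Rv : recession [::] E (x - x1).
    by split=> // e eE; rewrite -affB Px.2 ?P1.2 ?subrr.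
  have cv : 0 < lin c (x - x1) by rewrite -affB subr_gt0.
  have [y Py By] := recession_unbounded P1 Rv cv B.
  by have := HB y Py; rewrite leNgt By.
(* Either a maximizer without the constraint [0 <= aff a] satisfies it, or every
   point can be pushed onto the facet [aff a = 0] without decreasing [aff c]. *)
have [[xs Pxs Mxs]|push] : (exists2 xs, polyhedron (a :: J) E xs &
      forall x, polyhedron (a :: J) E x -> aff c x <= aff c xs) \/
    (forall y, polyhedron (a :: J) E y ->
      exists2 z, polyhedron J (a :: E) z & aff c y <= aff c z).
  - have P1' := ((polyhedron_cons a J E x1).1 P1).2.
    have [bd|[v Rv cv]] := bounded_or_recession J E c.
      have [xs Pxs Mxs] := IH E c (ex_intro _ x1 P1') bd.
      have [axs|axs] := leP 0 (aff a xs).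
        left; exists xs => [|x /polyhedron_cons[_ /Mxs]//].
        exact/polyhedron_cons.
      right=> y Py; apply: segment_to_face (Py) Pxs axs _.
      by apply/Mxs; case/polyhedron_cons: Py.
    have [av|av] := leP 0 (lin a v).
      2: by right=> y Py; exact: ray_to_face Py Rv av (ltW cv).
    have Rv' : recession (a :: J) E v by exact/recession_cons.
    have [y Py By] := recession_unbounded P1 Rv' cv B.
    by have := HB y Py; rewrite leNgt By.
  - by exists xs.
have [z1 Pz1 _] := push x1 P1.
have [zs Pzs Mzs] := IH (a :: E) c (ex_intro _ z1 Pz1)
  (ex_intro _ B (fun x Px => HB x (polyhedron_faceW Px))).
exists zs => [|x Px]; first exact: polyhedron_faceW.
by have [z Pz xz] := push x Px; exact: le_trans xz (Mzs z Pz).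
Qed.

Lemma polyhedron_norm_max J E c : (exists x, polyhedron J E x) ->
  (exists B, forall x, polyhedron J E x -> `|aff c x| <= B) ->
  exists2 xs, polyhedron J E xs & forall x, polyhedron J E x -> `|aff c x| <= `|aff c xs|.
Proof.
move=> ne [B HB].
have bd d : (forall x, aff d x <= `|aff c x|) ->
    exists B, forall x, polyhedron J E x -> aff d x <= B.
  by move=> dc; exists B => x Px; exact: le_trans (dc x) (HB x Px).
have [xp Pp Mp] := polyhedron_max ne (bd c (fun x => ler_norm _)).
have Nc x : aff (- c) x <= `|aff c x| by rewrite affNl -normrN ler_norm.
have [xm Pm Mm] := polyhedron_max ne (bd (- c) Nc).
have {}Mm x : polyhedron J E x -> - aff c x <= - aff c xm by rewrite -!affNl; apply: Mm.
have [le|lt] := leP (- aff c xm) (aff c xp).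
  exists xp => // x Px; have := Mp x Px; have := Mm x Px; have := Mm xp Pp => h1 h2 h3.
  by rewrite ler_norml [`|_|]ger0_norm; [apply/andP; split|]; lra.
exists xm => // x Px; have := Mp x Px; have := Mm x Px; have := Mp xm Pm => h1 h2 h3.
by rewrite ler_norml [`|_|]ler0_norm; [apply/andP; split|]; lra.
Qed.

End Polyhedra.

Section Topology.
Variables (R : realType) (n : nat).
Local Notation V := 'rV[R]_n.

Lemma lin_continuous (a : affn R n) : continuous (lin a).
Proof.
rewrite /lin; elim: (index_enum _) => [|i s IH].
  by under eq_fun do rewrite big_nil; exact: cst_continuous.
under eq_fun do rewrite big_cons.
move=> x; apply: (@continuousD _ _ _ (fun z : V => a.1 0 i * z 0 i)); last exact: IH.
by apply: continuousM; [exact: cst_continuous | exact: coord_continuous].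
Qed.

Lemma aff_continuous (a : affn R n) : continuous (aff a).
Proof. by move=> x; apply: continuousD; [exact: lin_continuous | exact: cst_continuous]. Qed.

Lemma closure_ge0 (T : topologicalType) (g : T -> R) (Q : set T) : continuous g ->
  (forall x, Q x -> 0 <= g x) -> forall x, closure Q x -> 0 <= g x.
Proof.
move=> cg Qg; have cl : closed [set x | 0 <= g x].
  exact: (continuous_closedP g).1 cg _ (@closed_ge R 0).
by move=> x /(closureS Qg); rewrite -(closure_id _).1.
Qed.

Lemma closure_segment (W : normedModType R) (Q : set W) (y p : W) :
  (forall e : R, 0 < e -> e <= 1 -> Q (y + e *: (p - y))) -> closure Q y.
Proof.
move=> Qseg B /nbhs_ballP[r r0 rB].
pose e := Num.min 1 (r / (2 * (`|p - y| + 1))).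
have e0 : 0 < e by rewrite lt_min ltr01 divr_gt0 // mulr_gt0 // ltr_pwDr.
have e1 : e <= 1 by rewrite ge_min lexx.
exists (y + e *: (p - y)); split; first exact: Qseg.
apply: rB; rewrite -ball_normE /= opprD addrA subrr add0r normrN normrZ gtr0_norm //.
have er : e <= r / (2 * (`|p - y| + 1)) by rewrite ge_min lexx orbT.
rewrite (le_lt_trans (ler_wpM2r (normr_ge0 _) er)) //.
rewrite mulrAC ltr_pdivrMr ?mulr_gt0 ?ltr_pwDr // ltr_pM2l //.
by have := normr_ge0 (p - y); lra.
Qed.

End Topology.

Section Cell.
Variables (R : realType) (n : nat) (A : seq (affn R n)) (x0 : 'rV[R]_n).
Hypothesis x0A : arr_compl A x0.
Local Notation V := 'rV[R]_n.
Implicit Types (a h : affn R n) (x y p v : V).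

Definition oriented : seq (affn R n) := [seq aff h x0 *: h | h <- A].

Definition cell : set V := [set x | forall a, a \in oriented -> 0 < aff a x].

Definition closed_cell : set V := polyhedron oriented [::].

Definition cell_cone : set V := recession oriented [::].

Lemma cell_x0 : cell x0.
Proof.
by move=> _ /mapP[h hA ->]; rewrite affZl -expr2 exprn_even_gt0 //; exact: x0A.
Qed.

Lemma cell_closed_cell : cell `<=` closed_cell.
Proof. by move=> x Sx; split=> // a aJ; exact/ltW/Sx. Qed.

Lemma cell_compl : cell `<=` arr_compl A.
Proof.
move=> x Sx h hA; apply/eqP => hx.
by have := Sx _ (map_f (fun h => aff h x0 *: h) hA); rewrite affZl hx mulr0 ltxx.
Qed.

Lemma cell_segment y p (e : R) : closed_cell y -> cell p -> 0 < e -> e <= 1 ->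
  cell (y + e *: (p - y)).
Proof.
move=> [Sy _] Sp e0 e1 a aJ; rewrite aff_segment.
by apply: ltr_wpDl; [rewrite mulr_ge0 ?subr_ge0 ?Sy | rewrite mulr_gt0 ?Sp].
Qed.

Lemma cell_ray x v (s : R) : cell x -> cell_cone v -> 0 <= s -> cell (x + s *: v).
Proof.
by move=> Sx [Cv _] s0 a aJ; rewrite affDr linZr ltr_wpDr ?mulr_ge0 ?Sx ?Cv.
Qed.

Lemma connected_sub_cell (C : set V) : connected C -> C `<=` arr_compl A -> C x0 ->
  C `<=` cell.
Proof.
move=> Cc CA Cx0 y Cy a aJ.
suff : C `&` [set x | 0 < aff a x] = C by move=> eC; rewrite -eC in Cy; case: Cy.
have ca := @aff_continuous R n a.
apply: Cc; first by exists x0; split=> //; exact: cell_x0.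
  by exists [set x | 0 < aff a x] => //; exact: (continuousP _).1 ca _ (@open_gt R 0).
exists [set x | 0 <= aff a x]; first exact: (continuous_closedP _).1 ca _ (@closed_ge R 0).
apply/seteqP; split=> x [Cx ax]; split=> //; first exact: ltW.
move: aJ => /mapP[h hA eh]; rewrite /= lt_def ax andbT eh affZl mulf_neq0 //.
  exact: x0A.
exact: CA.
Qed.

Lemma component_cell : connected_component (arr_compl A) x0 = cell.
Proof.
apply/seteqP; split=> [y [C [Cx0 CA Cc] Cy]|y Sy]; first exact: connected_sub_cell Cy.
pose f (s : R) := y + s *: (x0 - y).
have cf : continuous f.
  move=> s; apply: (@continuousD _ _ _ (fun=> y) (fun s : R => s *: (x0 - y))).
    exact: cst_continuous.
  exact: continuousZr_tmp.
have in01 (s : R) : 0 <= s <= 1 -> s \in `[0, 1] by rewrite in_itv.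
exists (f @` `[0, 1]); last by exists 0; [exact/in01/andP | rewrite /f scale0r addr0].
split.
- by exists 1; [exact/in01/andP | rewrite /f scale1r addrC subrK].
- move=> _ [s s01 <-]; move: s01; rewrite /= in_itv /= => /andP[s0 s1].
  apply: cell_compl; have [->|s_neq0] := eqVneq s 0; first by rewrite /f scale0r addr0.
  apply: cell_segment s1; first exact: cell_closed_cell.
    exact: cell_x0.
  by rewrite lt_def s_neq0.
- apply: connected_continuous_connected; first exact: segment_connected.
  exact: continuous_subspaceT.
Qed.

Lemma closure_cell : closure cell = closed_cell.
Proof.
apply/seteqP; split=> [x Cx|y Sy]; last first.
  by apply: (closure_segment (p := x0)) => e e0 e1; exact: cell_segment cell_x0 e0 e1.
split=> // a aJ; apply: closure_ge0 Cx => [|z Sz]; first exact: aff_continuous.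
exact/ltW/Sz.
Qed.

Lemma closure_cell_sublevel (f0 : affn R n) (t : R) p : cell p -> aff f0 p < t ->
  closure (cell `&` [set x | aff f0 x < t]) = closed_cell `&` [set x | aff f0 x <= t].
Proof.
move=> Sp f0p; apply/seteqP; split=> [x Cx|y [Sy f0y]].
  split; first by rewrite -closure_cell; apply: closureS Cx => z [].
  rewrite /= -subr_ge0 -(aff_constE t x) -affBl.
  apply: closure_ge0 Cx => [|z [_ f0z]]; first exact: aff_continuous.
  by rewrite affBl aff_constE subr_ge0 ltW.
apply: (closure_segment (p := p)) => e e0 e1; split; first exact: cell_segment.
rewrite /= aff_segment.
have : (1 - e) * aff f0 y <= (1 - e) * t by rewrite ler_wpM2l // subr_ge0.
have : e * aff f0 p < e * t by rewrite ltr_pM2l.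
lra.
Qed.

Lemma rec_cone_cell : rec_cone cell = cell_cone.
Proof.
apply/seteqP; split=> [v Rv|v Cv x s]; last first.
  by rewrite closure_cell => Sx s0; exact: polyhedron_ray.
split=> // a aJ; rewrite leNgt; apply/negP => av.
have ax0 : 0 < aff a x0 by exact: cell_x0.
pose s := aff a x0 / - lin a v + 1.
have s0 : 0 <= s by rewrite addr_ge0 // divr_ge0 ?oppr_ge0 ?ltW.
have := Rv x0 s (subset_closure cell_x0) s0; rewrite closure_cell => -[/(_ a aJ) + _].
have -> : aff a (x0 + s *: v) = lin a v.
  by rewrite affDr linZr /s; field; rewrite ltr0_neq0.
by rewrite leNgt av.
Qed.

End Cell.

Section GrowingCell.
Variables (R : realType) (n : nat) (A : seq (affn R n)) (x0 : 'rV[R]_n) (f0 : affn R n).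
Hypothesis x0A : arr_compl A x0.
Hypothesis grow :
  forall M : R, exists r : R, forall x, cell A x0 x -> r < `|x| -> M < aff f0 x.
Local Notation V := 'rV[R]_n.
Implicit Types (c : affn R n) (v w : V).

Lemma cone_f0_gt0 v : cell_cone A x0 v -> v != 0 -> 0 < lin f0 v.
Proof.
move=> Cv v0; rewrite ltNge; apply/negP => f0v.
have [r Hr] := grow (aff f0 x0).
have nv : 0 < `|v| by rewrite normr_gt0.
pose s := (`|r| + `|x0| + 1) / `|v|.
have s0 : 0 <= s by rewrite divr_ge0 // addr_ge0.
have far : r < `|x0 + s *: v|.
  have : `|s *: v| <= `|x0 + s *: v| + `|x0|.
    by rewrite -[X in `|X| <= _](addKr x0) addrC ler_normB.
  rewrite normrZ ger0_norm // /s divfK ?gt_eqF //.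
  by have := ler_norm r; lra.
have := Hr _ (cell_ray (cell_x0 x0A) Cv s0) far.
by rewrite affDr linZr ltrDl ltNge mulr_ge0_le0.
Qed.

(* A point [v] of tr(Delta) in W has a representative with [lin f0 v = 1], at which
   h is [lin f v]. *)
Definition slice : set V :=
  polyhedron [seq lin_part a | a <- oriented A x0] [:: lin_part f0 - aff_const n 1].

Lemma sliceP v : slice v <-> cell_cone A x0 v /\ lin f0 v = 1.
Proof.
have f0E : aff (lin_part f0 - aff_const n 1) v = lin f0 v - 1.
  by rewrite affBl aff_lin_part aff_constE.
split=> [/polyhedron_face[+ /polyhedron_lin_part Cv]|[Cv f0v]].
  by rewrite f0E => /eqP; rewrite subr_eq0 => /eqP.
by apply/polyhedron_face; rewrite f0E f0v subrr; split=> //; exact/polyhedron_lin_part.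
Qed.

Lemma slice_normalize w : cell_cone A x0 w -> w != 0 -> slice ((lin f0 w)^-1 *: w).
Proof.
move=> Cw w0; have f0w := cone_f0_gt0 Cw w0.
apply/sliceP; rewrite linZr mulVf ?gt_eqF //; split=> //.
by apply: (recessionZ Cw); rewrite invr_ge0 ltW.
Qed.

Lemma slice_bounded c : exists B, forall v, slice v -> aff c v <= B.
Proof.
have [//|[w [wJ wE] cw]] := bounded_or_recession
  [seq lin_part a | a <- oriented A x0] [:: lin_part f0 - aff_const n 1] c.
have Cw : cell_cone A x0 w by split=> // a aJ; exact: wJ _ (map_f (@lin_part _ _) aJ).
have w0 : w != 0 by apply: (nonzero_of_lin (a := c)); rewrite gt_eqF.
exfalso; have := cone_f0_gt0 Cw w0; have := wE _ (mem_head _ _).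
by rewrite linBl lin_lin_part lin_aff_const subr0 => ->; rewrite ltxx.
Qed.

Lemma slice_abs_bounded c : exists B, forall v, slice v -> `|aff c v| <= B.
Proof.
have [B1 HB1] := slice_bounded c; have [B2 HB2] := slice_bounded (- c).
exists (`|B1| + `|B2|) => v Sv; rewrite -[_ + _]add0r.
by apply: ler_norm_of_bounds; rewrite add0r -?affNl; [exact: HB1 | exact: HB2].
Qed.

End GrowingCell.

Section ExternalSupport.
Variables (R : realType) (n : nat) (A : seq (affn R n)) (x0 : 'rV[R]_n) (f0 f : affn R n).
Hypothesis x0A : arr_compl A x0.
Hypothesis grow :
  forall M : R, exists r : R, forall x, cell A x0 x -> r < `|x| -> M < aff f0 x.
Hypothesis unbf : forall M : R, exists2 x, cell A x0 x & M < `|aff f x|.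
Local Notation V := 'rV[R]_n.
Local Notation Dt t := (cell A x0 `&` [set x | aff f0 x < t]).
Implicit Types (x v w : V).

Lemma cone_dir_f : exists2 w, cell_cone A x0 w & lin f w != 0.
Proof.
have [[B1 HB1]|[w Cw fw]] := bounded_or_recession (oriented A x0) [::] f; last first.
  by exists w; rewrite // gt_eqF.
have [[B2 HB2]|[w Cw fw]] := bounded_or_recession (oriented A x0) [::] (- f); last first.
  by exists w; rewrite // -oppr_eq0 -linNl gt_eqF.
have [x /cell_closed_cell Sx] := unbf (`|B1| + `|B2|); rewrite ltNge => /negP fx.
exfalso; apply: fx; rewrite -[_ + _]add0r.
by apply: ler_norm_of_bounds; rewrite add0r -?affNl; [exact: HB1 | exact: HB2].
Qed.

Lemma ext_value_inf_exists : exists K, ext_value_inf (cell A x0) f f0 K.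
Proof.
have [w Cw fw] := cone_dir_f.
have ne := ex_intro _ _ (slice_normalize x0A grow Cw (nonzero_of_lin fw)).
have [vs Svs Mvs] := polyhedron_norm_max ne (slice_abs_bounded x0A grow (lin_part f)).
have /sliceP[Cvs f0vs] := Svs.
exists `|lin f vs|; split.
  have hvs : hinf f f0 vs = lin f vs by rewrite /hinf f0vs divr1.
  exists vs; rewrite (rec_cone_cell x0A) hvs f0vs oner_eq0; split=> //.
  by apply: (nonzero_of_lin (a := f0)); rewrite f0vs oner_eq0.
move=> w' + w'0 _; rewrite (rec_cone_cell x0A) => Cw'.
have := Mvs _ (slice_normalize x0A grow Cw' w'0).
by rewrite !aff_lin_part linZr mulrC.
Qed.

Variables (K : R).
Hypothesis HK : ext_value_inf (cell A x0) f f0 K.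

Lemma cone_abs_le w : cell_cone A x0 w -> `|lin f w| <= K * lin f0 w.
Proof.
move=> Cw; have [->|w0] := eqVneq w 0; first by rewrite !lin0r normr0 mulr0.
have f0w := cone_f0_gt0 x0A grow Cw w0.
have := HK.2 w _ w0 (lt0r_neq0 f0w); rewrite (rec_cone_cell x0A) => /(_ Cw).
by rewrite /hinf normrM [`|_^-1|]gtr0_norm ?invr_gt0 // ler_pdivrMr.
Qed.

Lemma K_gt0 : 0 < K.
Proof.
have [w Cw fw] := cone_dir_f.
have f0w := cone_f0_gt0 x0A grow Cw (nonzero_of_lin fw).
by rewrite -(pmulr_lgt0 _ f0w) (lt_le_trans _ (cone_abs_le Cw)) ?normr_gt0.
Qed.

Lemma cone_abs_attained :
  exists v, [/\ cell_cone A x0 v, 0 < lin f0 v & `|lin f v| = K * lin f0 v].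
Proof.
have [[v [+ v0 f0v <-]] _] := HK; rewrite (rec_cone_cell x0A) => Cv.
have f0v_gt0 := cone_f0_gt0 x0A grow Cv v0.
by exists v; rewrite /hinf normrM [`|_^-1|]gtr0_norm ?invr_gt0 // divfK.
Qed.

Lemma closed_cell_abs_le :
  exists C, forall x, closed_cell A x0 x -> `|aff f x| <= K * aff f0 x + C.
Proof.
have side c : (forall w, lin c w <= `|lin f w|) ->
    exists B, forall x, closed_cell A x0 x -> aff c x - K * aff f0 x <= B.
  move=> cf; have [[B HB]|[w Cw]] := bounded_or_recession (oriented A x0) [::] (c - K *: f0).
    by exists B => x Sx; rewrite -affZl -affBl; exact: HB.
  rewrite linBl linZl subr_gt0 => cw; have := le_trans (cf w) (cone_abs_le Cw).
  by rewrite leNgt cw.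
have Nf w : lin (- f) w <= `|lin f w| by rewrite linNl -normrN ler_norm.
have [B1 H1] := side f (fun w => ler_norm _); have [B2 H2] := side (- f) Nf.
exists (`|B1| + `|B2|) => x Sx; apply: ler_norm_of_bounds; first by have := H1 x Sx; lra.
by have := H2 x Sx; rewrite affNl; lra.
Qed.

Lemma closure_sublevel_abs_le : exists C, forall t x, aff f0 x0 < t ->
  closure (Dt t) x -> `|aff f x| <= K * t + C.
Proof.
have [C HC] := closed_cell_abs_le; exists C => t x f0t.
rewrite (closure_cell_sublevel x0A (cell_x0 x0A) f0t) => -[Sx f0x].
apply: le_trans (HC x Sx) _; rewrite lerD2r; apply: ler_wpM2l => //.
exact/ltW/K_gt0.
Qed.

Lemma ext_pt_exists t : aff f0 x0 < t -> exists x, ext_pt (Dt t) f x.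
Proof.
move=> f0t; have [C HC] := closure_sublevel_abs_le.
pose J := (aff_const n t - f0) :: oriented A x0.
have PJ x : polyhedron J [::] x <-> closure (Dt t) x.
  rewrite (closure_cell_sublevel x0A (cell_x0 x0A) f0t).
  split=> [/polyhedron_cons[+ Sx]|[Sx f0x]]; last first.
    by apply/polyhedron_cons; rewrite affBl aff_constE subr_ge0.
  by rewrite affBl aff_constE subr_ge0.
have ne : exists x, polyhedron J [::] x.
  by exists x0; apply/PJ/subset_closure; split=> //; exact: cell_x0.
have bd : exists B, forall x, polyhedron J [::] x -> `|aff f x| <= B.
  by exists (K * t + C) => x /PJ; exact: HC.
have [xs Pxs Mxs] := polyhedron_norm_max ne bd.
by exists xs; split=> [|y /PJ]; [exact/PJ | exact: Mxs].
Qed.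

Lemma ext_pt_near : exists D, forall t x, aff f0 x0 < t -> ext_pt (Dt t) f x ->
  `| `|aff f x| - K * t| <= D.
Proof.
have [C HC] := closure_sublevel_abs_le; have [v [Cv f0v fv]] := cone_abs_attained.
have K0 := K_gt0.
exists (`|C| + K * `|aff f0 x0| + `|aff f x0|) => t x f0t [Cx Mx].
have closureE := closure_cell_sublevel x0A (cell_x0 x0A) f0t.
have upper : `|aff f x| <= K * t + `|C|.
  by apply: le_trans (HC t x f0t Cx) _; rewrite lerD2l ler_norm.
pose s := (t - aff f0 x0) / lin f0 v.
have s0 : 0 <= s by rewrite divr_ge0 ?subr_ge0 ?ltW.
have Cy : closure (Dt t) (x0 + s *: v).
  rewrite closureE; split; first exact: polyhedron_ray (cell_closed_cell (cell_x0 x0A)) Cv s0.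
  by rewrite /= affDr linZr /s divfK ?gt_eqF // addrC subrK.
have lower : K * (t - aff f0 x0) - `|aff f x0| <= `|aff f x|.
  apply: le_trans (Mx _ Cy); rewrite lerBlDr.
  have -> : K * (t - aff f0 x0) = `|lin f (s *: v)|.
    by rewrite linZr normrM ger0_norm // fv /s; field; rewrite gt_eqF.
  by rewrite affDr -[X in `|X| <= _](addKr (aff f x0)) addrC ler_normB.
have : K * aff f0 x0 <= K * `|aff f0 x0| by apply: ler_wpM2l; [exact: ltW | exact: ler_norm].
have := normr_ge0 (aff f x0); have := normr_ge0 C; have := normr_ge0 (aff f0 x0).
by rewrite ler_norml => *; apply/andP; split; nra.
Qed.

End ExternalSupport.

Section ComplexPowers.
Variable R : realType.

Lemma cexpD (z w : R[i]) : cexp (z + w) = cexp z * cexp w.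
Proof.
case: z => a b; case: w => c d; apply/eqP; rewrite eq_complex /= expRD cosD sinD.
by apply/andP; split; apply/eqP; ring.
Qed.

Lemma cexp_ln_ratio (al : R[i]) (th L K t : R) : 0 < L -> 0 < K -> 0 < t ->
  cexp (al * ((ln L)%:C + th *i)) =
  cexp (al * ((ln K)%:C + th *i)) * cexp (al * (ln t)%:C) *
  cexp (al * (ln (L / (K * t)))%:C).
Proof.
move=> L0 K0 t0; rewrite -!cexpD; congr cexp.
by rewrite ln_div ?posrE ?mulr_gt0 // lnM ?posrE // !rmorphB !rmorphD /=; ring.
Qed.

Lemma cvg_cmod_cexp_sub1 (T : Type) (F : set_system T) (FF : Filter F)
    (al : R[i]) (u : T -> R) :
  u @ F --> 0 -> (fun t => cmod (cexp (al * (u t)%:C) - 1)) @ F --> 0.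
Proof.
case: al => a b u0.
have at0 (g : R -> R) k : continuous g -> (fun t => g (k * u t)) @ F --> g 0.
  move=> cg; apply: (@continuous_cvg _ _ _ _ _ (fun t => k * u t) g 0 (cg 0)).
  by rewrite -(mulr0 k); exact: cvgMl_tmp.
have -> : (fun t => cmod (cexp ((a +i* b) * (u t)%:C) - 1)) =
    (fun t => Num.sqrt (expR (a * u t) * (expR (a * u t) - 2 * cos (b * u t)) + 1)).
  apply: funext => t; rewrite /cmod /cexp /= !mulr0 subr0 add0r subr0.
  by congr Num.sqrt; have := cos2Dsin2 (b * u t); rewrite !expr2 => cs; nra.
have lim0 : Num.sqrt (1 * (1 - 2 * 1) + 1) = 0 :> R by rewrite -sqrtr0; congr Num.sqrt; lra.
rewrite -lim0.
apply: (@continuous_cvg _ _ _ _ _ _ Num.sqrt _ (@sqrt_continuous R _)).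
apply: cvgD; last exact: cvg_cst.
have E1 : (fun t => expR (a * u t)) @ F --> (1 : R).
  by rewrite -expR0; exact: (at0 _ a (@continuous_expR R)).
apply: cvgM => //; apply: cvgB => //; apply: cvgMl_tmp.
by rewrite -cos0; exact: (at0 _ b (@continuous_cos R)).
Qed.

Lemma ratio_cvg1 (K D : R) (L : R -> R) : 0 < K ->
  (\forall t \near +oo, `|L t - K * t| <= D) -> (fun t => L t / (K * t)) @ +oo --> (1 : R).
Proof.
move=> K0 LD; apply/cvgrPdist_le => e e0; near=> t.
have t0 : 0 < t by near: t; exact: (nbhs_pinfty_gt (num_real _)).
have Kt : 0 < K * t by rewrite mulr_gt0.
have -> : 1 - L t / (K * t) = (K * t - L t) / (K * t) by field; rewrite !lt0r_neq0.
rewrite normrM [`|_^-1|]gtr0_norm ?invr_gt0 // ler_pdivrMr // distrC.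
apply: le_trans (_ : D <= _); first by near: t.
have : D / (e * K) < t by near: t; exact: (nbhs_pinfty_gt (num_real _)).
by rewrite ltr_pdivrMr ?mulr_gt0 //; lra.
Unshelve. all: end_near.
Qed.

End ComplexPowers.

Theorem corollary1 (R : realType) (n : nat) (A : seq (affn R n))
  (f0 f : affn R n) (Delta : set 'rV[R]_n) (alpha : R[i]) (theta : R) :
  arrangement A -> essential A ->
  nonconstant f0 ->
  nonconstant f -> hyp_in (hyperplane f) A ->
  growing A f0 Delta ->
  (forall M : R, exists2 x, Delta x & M < `|aff f x|) ->
  let Delta_t := fun t : R => Delta `&` [set x | aff f0 x < t] in
  let g := fun x => cexp (alpha * ((ln `|aff f x|)%:C + (theta *i))) in
  (exists K, ext_value_inf Delta f f0 K) /\
  (\forall t \near +oo, exists x, ext_pt (Delta_t t) f x) /\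
  (forall (K : R) (xs : R -> 'rV[R]_n),
     ext_value_inf Delta f f0 K ->
     (\forall t \near +oo, ext_pt (Delta_t t) f (xs t)) ->
     let c_inf := cexp (alpha * ((ln K)%:C + (theta *i))) in
     exists eps : R -> R[i],
       (fun t => cmod (eps t)) @ +oo --> 0 /\
       \forall t \near +oo,
         g (xs t) = c_inf * cexp (alpha * (ln t)%:C) * (1 + eps t)).
Proof.
move=> _ _ _ _ _ [[x0 [x0A ->]] [_ grow]] unbf Delta_t g; rewrite {}/Delta_t {}/g.
rewrite (component_cell x0A) in grow unbf *.
have [K1 HK1] := ext_value_inf_exists x0A grow unbf.
split; first by exists K1.
split.
  near=> t; apply: (ext_pt_exists x0A grow unbf HK1).
  by near: t; exact: (nbhs_pinfty_gt (num_real _)).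
move=> K xs HK ext_xs.
have K0 := K_gt0 x0A grow unbf HK.
have [D HD] := ext_pt_near x0A grow unbf HK.
pose L t := `|aff f (xs t)|.
have LD : \forall t \near +oo, `|L t - K * t| <= D.
  near=> t; apply: HD; last by near: t.
  by near: t; exact: (nbhs_pinfty_gt (num_real _)).
pose eps t := cexp (alpha * (ln (L t / (K * t)))%:C) - 1.
exists eps; split.
  apply: cvg_cmod_cexp_sub1; rewrite -(ln1 R).
  exact: (@continuous_cvg _ _ _ _ _ _ _ _ (continuous_ln ltr01) (ratio_cvg1 K0 LD)).
near=> t.
have t0 : 0 < t by near: t; exact: (nbhs_pinfty_gt (num_real _)).
have Lt : 0 < L t.
  have : D / K < t by near: t; exact: (nbhs_pinfty_gt (num_real _)).
  have : `|L t - K * t| <= D by near: t.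
  by rewrite ltr_pdivrMr // ler_norml => /andP[] *; lra.
by rewrite (cexp_ln_ratio _ _ Lt K0 t0) /eps [1 + _]addrC subrK.
Unshelve. all: end_near.
Qed.
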